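(* Let $\{p^\circ_{(R,\alpha)}\}_{(R,\alpha)}$ be a replacement rule satisfying the Fixation Axiom and representing neutral drift. Then $\hat\Delta_{\mathrm{sel}}(\mathbf{x})=0$ for every state $\mathbf{x}\in\{0,1\}^G$. Furthermore, if $(\tilde v_g)_{g\in G}$ is any collection of real weights such that $$\tilde\Delta_{\mathrm{sel}}(\mathbf{x}):=\sum_{g,h\in G}x_g\big(e^\circ_{gh}\tilde v_h-e^\circ_{hg}\tilde v_g\big)=0\quad\text{for every state }\mathbf{x},$$ then $(\tilde v_g)_{g\in G}$ is a constant multiple of $(v_g)_{g\in G}$.
   Context: Setting. $G$ is a finite nonempty set of genetic sites, $n=|G|$; a state is $\mathbf{x}\in\{0,1\}^G$. A replacement event is $(R,\alpha)$ with $R\subseteq G$, $\alpha:R\to G$; a replacement rule gives for each state a probability distribution $\{p_{(R,\alpha)}(\mathbf{x})\}$ over events. The rule represents neutral drift if $p_{(R,\alpha)}(\mathbf{x})=p^\circ_{(R,\alpha)}$ is independent of $\mathbf{x}$ for every event. Fixation Axiom: there exist $g\in G$, $m\ge1$, events $(R_k,\alpha_k)_{k=1}^m$ with $p_{(R_k,\alpha_k)}>0$, $g\in R_k$ for some $k$, and $\tilde\alpha_1\circ\cdots\circ\tilde\alpha_m(h)=g$ for all $h\in G$, where $\tilde\alpha_k$ equals $\alpha_k$ on $R_k$ and the identity elsewhere. Quantities: $e^\circ_{gh}=\sum_{(R,\alpha):h\in R,\alpha(h)=g}p^\circ_{(R,\alpha)}$, $d^\circ_g=\sum_he^\circ_{hg}$.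 Reproductive values $(v_g)$: the unique solution of $d^\circ_gv_g=\sum_he^\circ_{gh}v_h$ for all $g\in G$ and $\sum_gv_g=n$. $\hat b_g=\sum_he^\circ_{gh}v_h$, $\hat d_g=v_gd^\circ_g$, $\hat\Delta_{\mathrm{sel}}(\mathbf{x})=\sum_gx_g(\hat b_g-\hat d_g)$. *)

From HB Require Import structures.
From mathcomp Require Import all_boot all_order all_algebra.
Set Implicit Arguments. Unset Strict Implicit. Unset Printing Implicit Defensive.
Import Order.TTheory GRing.Theory Num.Theory.
Local Open Scope ring_scope.

Definition state (G : finType) := {ffun G -> bool}.

(* A replacement event (R, alpha) with R ⊆ G, alpha : R -> G, encoded as
   ev h = Some (alpha h) if h ∈ R, and ev h = None if h ∉ R.
   This encoding is a bijection between pairs (R, alpha) and {ffun G -> option G}. *)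
Definition event (G : finType) := {ffun G -> option G}.

Definition ev_dom (G : finType) (E : event G) : {set G} := [set h | E h != None].

Definition ev_ext (G : finType) (E : event G) (h : G) : G := odflt h (E h).

Definition is_replacement_rule (R : realFieldType) (G : finType)
    (p : state G -> event G -> R) : Prop :=
  (forall x E, 0 <= p x E) /\ (forall x, \sum_(E : event G) p x E = 1).

Definition neutral_drift (R : realFieldType) (G : finType)
    (p : state G -> event G -> R) (p0 : event G -> R) : Prop :=
  forall x E, p x E = p0 E.

Definition fixation_axiom (R : realFieldType) (G : finType)
    (p0 : event G -> R) : Prop :=
  exists (g : G) (s : seq (event G)),
    [/\ (1 <= size s)%N,
        (forall E, E \in s -> 0 < p0 E),
        (exists2 E, E \in s & g \in ev_dom E) &
        (forall h : G, foldr (fun E y => ev_ext E y) h s = g)].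

Definition edge (R : realFieldType) (G : finType) (p0 : event G -> R)
    (g h : G) : R :=
  \sum_(E : event G | E h == Some g) p0 E.

Definition death (R : realFieldType) (G : finType) (p0 : event G -> R)
    (g : G) : R :=
  \sum_(h : G) edge p0 h g.

Definition is_reproductive_values (R : realFieldType) (G : finType)
    (p0 : event G -> R) (v : G -> R) : Prop :=
  (forall g, death p0 g * v g = \sum_(h : G) edge p0 g h * v h) /\
  \sum_(g : G) v g = #|G|%:R.

Definition b_hat (R : realFieldType) (G : finType) (p0 : event G -> R)
    (v : G -> R) (g : G) : R := \sum_(h : G) edge p0 g h * v h.

Definition d_hat (R : realFieldType) (G : finType) (p0 : event G -> R)
    (v : G -> R) (g : G) : R := v g * death p0 g.

Definition Delta_sel_hat (R : realFieldType) (G : finType) (p0 : event G -> R)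
    (v : G -> R) (x : state G) : R :=
  \sum_(g : G) (x g)%:R * (b_hat p0 v g - d_hat p0 v g).

Definition Delta_sel_tilde (R : realFieldType) (G : finType) (p0 : event G -> R)
    (vt : G -> R) (x : state G) : R :=
  \sum_(g : G) \sum_(h : G)
    (x g)%:R * (edge p0 g h * vt h - edge p0 h g * vt g).

From HB Require Import structures.
From mathcomp Require Import all_boot all_order all_algebra.
Set Implicit Arguments. Unset Strict Implicit. Unset Printing Implicit Defensive.
Import Order.TTheory GRing.Theory Num.Theory.
Local Open Scope ring_scope.

(* Under neutral drift the reproductive-value equations say exactly
   that each site's expected births and deaths, weighted by v, balance, so
   Delta_sel_hat vanishes term by term.  Testing Delta_sel_tilde = 0 on the
   state with a single mutant at g shows that vt satisfies the same equations,
   i.e. vt lies in the left kernel of the Laplacian L = diag(d) - E^T of the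
   weighted graph e.  The right kernel of L consists of the functions f with
   d_g f_g = sum_h e_hg f_h; by a maximum principle such an f is constant along
   every event of positive probability that moves a maximiser, and the Fixation
   Axiom carries every site to one site g, so f is constant.  The two kernels
   of a square matrix have equal dimension, so both have dimension at most one,
   and vt is a multiple of the nonzero v. *)

Lemma foldr_stable (T : Type) (U : eqType) (P : T -> Prop)
    (op : U -> T -> T) (s : seq U) (x : T) :
  (forall a, a \in s -> forall y, P y -> P (op a y)) ->
  P x -> P (foldr op x s).
Proof.
elim: s => [|a s IHs] //= stable Px.
apply: (stable); first exact: mem_head.
by apply: IHs => // b sb; apply: stable; rewrite in_cons sb orbT.
Qed.

Lemma sum_delta_mulr (R : pzRingType) (G : finType) (w a b : G -> R) (h : G) :
  \sum_g w g * ((g == h)%:R * a g - b g) = w h * a h - \sum_g w g * b g.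
Proof.
under eq_bigr do rewrite mulrBr.
rewrite sumrB (bigD1 h) //= eqxx mul1r big1 ?addr0 // => g /negbTE->.
by rewrite mul0r mulr0.
Qed.

Lemma rank_le1_scale (F : fieldType) (m n : nat) (S : 'M[F]_(m, n)) (u w : 'rV_n) :
  (\rank S <= 1)%N -> u != 0 -> (u <= S)%MS -> (w <= S)%MS ->
  exists c, w = c *: u.
Proof.
move=> rankS u_neq0 uS wS; apply/sub_rVP; apply: submx_trans wS _.
have rank_u : \rank u = 1%N by rewrite rank_rV u_neq0.
suff /andP[] : (u == S)%MS by [].
by rewrite -(mxrank_leqif_eq uS).2 eqn_leq rank_u rankS -rank_u mxrankS.
Qed.

Section Reindex.

Variables (R : pzRingType) (G : finType).

Definition rowG (w : G -> R) : 'rV[R]_#|G| := \row_i w (enum_val i).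

Definition mxG (a : G -> G -> R) : 'M[R]_#|G| :=
  \matrix_(i, j) a (enum_val i) (enum_val j).

Lemma rowG_enum_rank (u : 'rV[R]_#|G|) : rowG (fun g => u 0 (enum_rank g)) = u.
Proof. by apply/rowP => i; rewrite mxE enum_valK. Qed.

Lemma rowGE (w : G -> R) (g : G) : rowG w 0 (enum_rank g) = w g.
Proof. by rewrite mxE enum_rankK. Qed.

Lemma rowG_mulmx (w : G -> R) (a : G -> G -> R) (h : G) :
  (rowG w *m mxG a) 0 (enum_rank h) = \sum_g w g * a g h.
Proof.
rewrite mxE; under eq_bigr do rewrite !mxE enum_rankK.
exact: esym (big_enum_val (A := G) (fun g => w g * a g h)).
Qed.

Lemma trmx_mxG (a : G -> G -> R) : (mxG a)^T = mxG (fun g h => a h g).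
Proof. by apply/matrixP => i j; rewrite !mxE. Qed.

End Reindex.

Section Laplacian.

Variables (R : realFieldType) (G : finType) (p0 : event G -> R).

Definition balanced (w : G -> R) :=
  forall g, death p0 g * w g = \sum_h edge p0 g h * w h.

Definition harmonic (f : G -> R) :=
  forall g, death p0 g * f g = \sum_h edge p0 h g * f h.

Definition laplacian : 'M[R]_#|G| :=
  mxG (fun g h => (g == h)%:R * death p0 g - edge p0 h g).

Lemma Delta_sel_hat_balanced (v : G -> R) (x : state G) :
  balanced v -> Delta_sel_hat p0 v x = 0.
Proof.
move=> bal_v; rewrite /Delta_sel_hat big1 // => g _.
by rewrite /b_hat /d_hat -bal_v [v g * _]mulrC subrr mulr0.
Qed.

Lemma Delta_sel_tilde_single (vt : G -> R) (g : G) :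
  Delta_sel_tilde p0 vt [ffun y => y == g] =
  \sum_h edge p0 g h * vt h - death p0 g * vt g.
Proof.
rewrite /Delta_sel_tilde (bigD1 g) //= [X in _ + X]big1 => [|g' /negbTE g'g].
  rewrite ffunE eqxx addr0; under eq_bigr do rewrite mul1r.
  by rewrite sumrB /death mulr_suml.
by rewrite big1 // => h _; rewrite ffunE g'g mul0r.
Qed.

Lemma balanced_Delta_sel_tilde (vt : G -> R) :
  (forall x, Delta_sel_tilde p0 vt x = 0) -> balanced vt.
Proof.
move=> Delta0 g; apply/eqP; rewrite eq_sym -subr_eq0.
by rewrite -Delta_sel_tilde_single Delta0.
Qed.

Lemma harmonicN (f : G -> R) : harmonic f -> harmonic (fun g => - f g).
Proof.
move=> harm_f g; rewrite mulrN harm_f -sumrN.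
by apply: eq_bigr => h _; rewrite mulrN.
Qed.

Lemma balanced_sub_kermx (w : G -> R) :
  balanced w -> (rowG w <= kermx laplacian)%MS.
Proof.
move=> bal_w; rewrite sub_kermx; apply/eqP/rowP => j; rewrite [RHS]mxE /laplacian.
rewrite -(enum_valK j) rowG_mulmx sum_delta_mulr [w _ * _]mulrC bal_w.
by apply/eqP; rewrite subr_eq0; apply/eqP/eq_bigr => g _; rewrite mulrC.
Qed.

Lemma harmonic_kermx_tr (u : 'rV[R]_#|G|) :
  (u <= kermx laplacian^T)%MS -> harmonic (fun g => u 0 (enum_rank g)).
Proof.
set f := fun g => u 0 (enum_rank g).
rewrite -(rowG_enum_rank u) -/f sub_kermx /laplacian trmx_mxG => /eqP ker_f g.
have := congr1 (fun M : 'rV_#|G| => M 0 (enum_rank g)) ker_f; rewrite /= rowG_mulmx /=.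
under eq_bigr do rewrite eq_sym.
rewrite sum_delta_mulr mxE mulrC => /eqP; rewrite subr_eq0 => /eqP->.
by apply: eq_bigr => h _; rewrite mulrC.
Qed.

Hypothesis p0_ge0 : forall E, 0 <= p0 E.

Lemma edge_ge0 (g h : G) : 0 <= edge p0 g h.
Proof. exact: sumr_ge0. Qed.

Lemma edge_ge_event (E : event G) (g h : G) : E h = Some g -> p0 E <= edge p0 g h.
Proof.
move=> Eh; rewrite /edge (bigD1 E) /=; last by rewrite Eh.
by rewrite lerDl; apply: sumr_ge0.
Qed.

(* The balance equation at a maximiser y is a vanishing sum of nonnegative
   terms e_hy (f y - f h). *)
Lemma harmonic_max_edge (f : G -> R) (y z : G) :
  harmonic f -> (forall h, f h <= f y) -> 0 < edge p0 z y -> f z = f y.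
Proof.
move=> harm_f fy_max e_zy_gt0.
have gap_ge0 h (_ : true) : 0 <= edge p0 h y * (f y - f h).
  by rewrite mulr_ge0 ?edge_ge0 ?subr_ge0.
have gap_sum0 : \sum_h edge p0 h y * (f y - f h) = 0.
  under eq_bigr do rewrite mulrBr.
  by rewrite sumrB -mulr_suml -harm_f subrr.
have /eqP := psumr_eq0P gap_ge0 gap_sum0 (i := z) isT.
by rewrite mulf_eq0 gt_eqF //= subr_eq0 => /eqP.
Qed.

Variables (g0 : G) (s : seq (event G)).
Hypothesis s_pos : forall E, E \in s -> 0 < p0 E.
Hypothesis s_fix : forall h, foldr (fun E y => ev_ext E y) h s = g0.

Lemma harmonic_max_fixation (f : G -> R) (y : G) :
  harmonic f -> (forall h, f h <= f y) -> f g0 = f y.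
Proof.
move=> harm_f fy_max; rewrite -(s_fix y).
apply: (foldr_stable (P := fun z => f z = f y)) => // E sE z fz.
rewrite /ev_ext; case Ez: (E z) => [z'|] //=.
rewrite -fz; apply: (harmonic_max_edge harm_f) => [h|]; first by rewrite fz.
exact: lt_le_trans (s_pos sE) (edge_ge_event Ez).
Qed.

Lemma harmonic_const (f : G -> R) : harmonic f -> forall g, f g = f g0.
Proof.
move=> harm_f g.
case: (@arg_maxP _ _ _ g0 xpredT f isT) => y _ y_max.
case: (@arg_maxP _ _ _ g0 xpredT (fun g => - f g) isT) => y' _ y'_max.
have f_max := harmonic_max_fixation harm_f (fun h => y_max h isT).
have fN_max := harmonic_max_fixation (harmonicN harm_f) (fun h => y'_max h isT).
have fg_le : f g <= f g0 by rewrite f_max; exact: y_max.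
have fg_ge : f g0 <= f g by rewrite -lerN2 fN_max; exact: y'_max.
by apply/eqP; rewrite eq_le fg_le fg_ge.
Qed.

Lemma kermx_tr_laplacian_sub_const :
  (kermx laplacian^T <= (const_mx 1 : 'rV[R]_#|G|))%MS.
Proof.
apply/row_subP => i; move: (row i _) (row_sub i (kermx laplacian^T)) => u u_ker.
rewrite -(rowG_enum_rank u); apply/sub_rVP; exists (u 0 (enum_rank g0)).
apply/rowP => j; rewrite !mxE mulr1.
exact: harmonic_const (harmonic_kermx_tr u_ker) _.
Qed.

Lemma rank_kermx_laplacian : (\rank (kermx laplacian) <= 1)%N.
Proof.
rewrite mxrank_ker -mxrank_tr -mxrank_ker.
apply: leq_trans (mxrankS kermx_tr_laplacian_sub_const) _.
exact: rank_leq_row.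
Qed.

End Laplacian.

Lemma neutral_drift_ge0 (R : realFieldType) (G : finType)
    (p : state G -> event G -> R) (p0 : event G -> R) :
  is_replacement_rule p -> neutral_drift p p0 -> forall E, 0 <= p0 E.
Proof. by move=> [p_ge0 _] neutral E; rewrite -(neutral [ffun=> false]). Qed.

Theorem theorem6 (R : realFieldType) (G : finType)
    (p : state G -> event G -> R) (p0 : event G -> R) (v : G -> R) :
  (0 < #|G|)%N ->
  is_replacement_rule p ->
  neutral_drift p p0 ->
  fixation_axiom p0 ->
  is_reproductive_values p0 v ->
  (forall x : state G, Delta_sel_hat p0 v x = 0) /\
  (forall vt : G -> R,
     (forall x : state G, Delta_sel_tilde p0 vt x = 0) ->
     exists c : R, forall g : G, vt g = c * v g).
Proof.
move=> G_gt0 rule neutral [g0 [s [_ s_pos _ s_fix]]] [bal_v sum_v].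
split=> [x|vt Delta0]; first exact: Delta_sel_hat_balanced.
have p0_ge0 := neutral_drift_ge0 rule neutral.
have v_neq0 : rowG v != 0.
  apply/eqP => v0; suff : #|G|%:R == 0 :> R by rewrite pnatr_eq0 eqn0Ngt G_gt0.
  by rewrite -sum_v big1 // => g _; rewrite -(rowGE v) v0 mxE.
have [c vt_cv] := rank_le1_scale (rank_kermx_laplacian p0_ge0 s_pos s_fix)
  v_neq0 (balanced_sub_kermx bal_v)
  (balanced_sub_kermx (balanced_Delta_sel_tilde Delta0)).
by exists c => g; rewrite -(rowGE vt) -(rowGE v) vt_cv mxE.
Qed.
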